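(* Let $N\in\mathbb{N}$, let $\mathcal{T}$ be an $N$-regular rooted tree, let $\mathcal{S}\subset\mathcal{T}$ be a subtree, and let $1\le m\le N$ be an integer. Suppose that for every $m$-regular subtree $\mathcal{R}$ of $\mathcal{T}$, the set $\mathcal{S}\cap\mathcal{R}$ is infinite. Then $\mathcal{S}$ has an $(N-m+1)$-regular subtree.
   Context: A rooted tree is a connected graph without cycles with a distinguished vertex (the root), identified with its vertex set. The height of a vertex is the length of the unique path from the root to it. A successor of a vertex $\tau'$ is a vertex adjacent to $\tau'$ of height one greater. A subtree of $\mathcal{T}$ means a subset of vertices that contains the root of $\mathcal{T}$ and is closed under taking predecessors (so it is a rooted tree with the same root). A rooted tree is $N$-regular if every vertex has exactly $N$ successors. *)

(* The N-regular rooted tree is modelled concretely as the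
   tree of finite words over the alphabet 'I_N: the root is the empty word
   [::], and the successors of a vertex s are the words rcons s i, i : 'I_N.
   Every N-regular rooted tree is isomorphic to this one. *)
From mathcomp Require Import all_boot.

Set Implicit Arguments.
Unset Strict Implicit.
Unset Printing Implicit Defensive.

Definition vertex (N : nat) := seq 'I_N.

Definition is_subtree (N : nat) (S : vertex N -> Prop) : Prop :=
  S [::] /\ (forall (s : vertex N) (i : 'I_N), S (rcons s i) -> S s).

Definition has_k_successors_in (N : nat) (R : vertex N -> Prop) (k : nat)
    (s : vertex N) : Prop :=
  exists l : seq 'I_N,
    [/\ uniq l, size l = k & forall i : 'I_N, R (rcons s i) <-> i \in l].

Definition is_regular_subtree (N : nat) (k : nat) (R : vertex N -> Prop) : Prop :=
  is_subtree R /\ (forall s : vertex N, R s -> has_k_successors_in R k s).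

Definition infinite_set (N : nat) (A : vertex N -> Prop) : Prop :=
  ~ (exists l : seq (vertex N), forall s : vertex N, A s -> s \in l).

From mathcomp Require Import all_boot.
From mathcomp Require Import boolp zify.

Set Implicit Arguments.
Unset Strict Implicit.
Unset Printing Implicit Defensive.

(* Call a vertex s "n-escaping" if one can choose
   m successors at every vertex so that every path from s following these
   choices leaves S within n steps (see [escapes]).
   - If the root is n-escaping for some n, following the escaping choices
     yields an m-regular subtree R with S ∩ R contained in the words of
     length < n, a finite set: this contradicts the hypothesis.
   - Otherwise call s "safe" when s is in S and escapes for no n.  A safe
     vertex has fewer than m escaping successors (m of them, escaping within a
     common bound n, would make s escape within n + 1), hence at least
     N - m + 1 safe successors; the safe vertices thus contain an
     (N - m + 1)-regular subtree, which lies in S. *)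

Lemma sub_list_of_set (T : finType) (A : {set T}) (k : nat) :
  k <= #|A| -> exists l : seq T, [/\ uniq l, size l = k & {subset l <= A}].
Proof.
move=> leA; exists (take k (enum A)); split.
- by rewrite take_uniq // enum_uniq.
- by rewrite size_take -cardE; case: ltnP => // ?; apply/anti_leq/andP.
- by move=> i /mem_take; rewrite mem_enum.
Qed.

Section GrownTrees.
Variable N : nat.
Implicit Types (f : vertex N -> seq 'I_N) (s : vertex N).

(* The tree grown from the root by keeping, at each vertex s, exactly the
   successors [rcons s i] with i listed in [f s]; defined on reversed words so
   that the recursion follows the path from the root. *)
Fixpoint grown_rev f (r : seq 'I_N) : bool :=
  if r is i :: r' then grown_rev f r' && (i \in f (rev r')) else true.

Definition grown f s : Prop := grown_rev f (rev s).

Lemma grown_rcons f s i : grown f (rcons s i) <-> grown f s /\ i \in f s.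
Proof. by rewrite /grown rev_rcons /= revK; split => [/andP|[-> ->]]. Qed.

Lemma regular_subtree_in (P : vertex N -> Prop) (k : nat) :
  P [::] ->
  (forall s, P s -> exists l : seq 'I_N,
     [/\ uniq l, size l = k & forall i, i \in l -> P (rcons s i)]) ->
  exists R : vertex N -> Prop, is_regular_subtree k R /\ forall s, R s -> P s.
Proof.
move=> P0 stepP.
have [f Hf] : {f : vertex N -> seq 'I_N & forall s, P s ->
    [/\ uniq (f s), size (f s) = k & forall i, i \in f s -> P (rcons s i)]}.
  apply: (@choice _ _ (fun s l => P s ->
    [/\ uniq l, size l = k & forall i, i \in l -> P (rcons s i)])) => s.
  case: (EM (P s)) => [/stepP [l Hl]|nP]; first by exists l.
  by exists [::].
have grownP s : grown f s -> P s.
  elim/last_ind: s => [//|s i IH /grown_rcons [/IH Ps il]].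
  by have [_ _] := Hf s Ps; apply.
exists (grown f); split=> //; split; first split.
- by [].
- by move=> s i /grown_rcons [].
- move=> s Rs; have [uf szf _] := Hf s (grownP s Rs).
  by exists (f s); split=> // i; rewrite grown_rcons; split=> [[]|].
Qed.

Lemma bounded_height_finite (n : nat) :
  exists l : seq (vertex N), forall s, size s <= n -> s \in l.
Proof.
elim: n => [|n [l Hl]]; first by exists [:: [::]] => -[].
exists ([::] :: [seq i :: w | i <- enum 'I_N, w <- l]) => -[//|i s].
rewrite ltnS => /Hl sl; rewrite inE; apply/orP; right.
by apply: (allpairs_f (fun i w => i :: w)); rewrite ?mem_enum.
Qed.

End GrownTrees.

Section EscapeGame.
Variables (N m : nat) (S : vertex N -> Prop).
Hypothesis S_subtree : is_subtree S.
Hypothesis m_range : 1 <= m <= N.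

Fixpoint escapes (n : nat) (s : vertex N) : Prop :=
  if n is n'.+1 then ~ S s \/ exists l : seq 'I_N,
     [/\ uniq l, size l = m & forall i, i \in l -> escapes n' (rcons s i)]
  else False.

Lemma escapes_mono (n n' : nat) (s : vertex N) :
  n <= n' -> escapes n s -> escapes n' s.
Proof.
elim: n n' s => [//|n IH] [//|n'] s /= le [nS|[l [ul szl Hl]]]; first by left.
by right; exists l; split=> // i /Hl; apply: IH.
Qed.

Lemma escapes_common (s : vertex N) (l : seq 'I_N) :
  (forall i, i \in l -> exists n, escapes n (rcons s i)) ->
  exists n, forall i, i \in l -> escapes n (rcons s i).
Proof.
elim: l => [_|j l IH Hl]; first by exists 0.
have [n1 Hn1] := Hl j (mem_head _ _).
have [n2 Hn2] : exists n, forall i, i \in l -> escapes n (rcons s i).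
  by apply: IH => i il; apply: Hl; rewrite inE il orbT.
exists (maxn n1 n2) => i; rewrite inE => /predU1P [-> | il].
- exact: escapes_mono (leq_maxl n1 n2) Hn1.
- exact: escapes_mono (leq_maxr n1 n2) (Hn2 _ il).
Qed.

Lemma escaping_root_finite (n : nat) :
  escapes n [::] ->
  exists R : vertex N -> Prop,
    is_regular_subtree m R /\ ~ infinite_set (fun s => S s /\ R s).
Proof.
move=> root_esc; case/andP: m_range => _ mN; case: S_subtree => _ S_pred.
pose P s := S s -> exists k, escapes k s /\ size s + k <= n.
have [R [Rreg RP]] : exists R, is_regular_subtree m R /\ forall s, R s -> P s.
  apply: regular_subtree_in => [_|s Ps]; first by exists n.
  have [any [uany szany _]] : exists l : seq 'I_N, [/\ uniq l, size l = m & {subset l <= setT}].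
    by apply: sub_list_of_set; rewrite cardsT card_ord.
  case: (EM (S s)) => [Ss|nS]; last first.
    by exists any; split=> // i _ /S_pred.
  have [[|k] [//= [//|[l [ul' szl' Hl]]] hk]] := Ps Ss.
  exists l; split=> // i il _; exists k; split; first exact: Hl.
  by rewrite size_rcons addSnnS.
have [l Hl] := bounded_height_finite N n.
split with R; split=> //; apply; exists l => s [Ss Rs]; apply: Hl.
by have [[|k] [//= _ hk]] := RP s Rs Ss; lia.
Qed.

Definition safe (s : vertex N) : Prop := S s /\ forall n, ~ escapes n s.

(* A safe vertex has fewer than m escaping successors, hence N - m + 1 safe
   successors. *)
Lemma safe_successors (s : vertex N) :
  safe s -> exists l : seq 'I_N,
    [/\ uniq l, size l = N - m + 1 & forall i, i \in l -> safe (rcons s i)].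
Proof.
move=> [Ss never]; case/andP: m_range => m1 _.
pose Esc := [set i : 'I_N | `[< exists n, escapes n (rcons s i) >]].
have few_esc : #|Esc| < m.
  rewrite ltnNge; apply/negP => /sub_list_of_set [l [ul szl lEsc]].
  have [n Hn] : exists n, forall i, i \in l -> escapes n (rcons s i).
    by apply: escapes_common => i /lEsc; rewrite inE => /asboolP.
  by apply: (never n.+1); right; exists l.
have [l [ul szl lsafe]] : exists l : seq 'I_N,
    [/\ uniq l, size l = N - m + 1 & {subset l <= ~: Esc}].
  by apply: sub_list_of_set; have := cardsC Esc; rewrite card_ord; lia.
exists l; split=> // i /lsafe; rewrite !inE => /asboolP not_esc.
split=> [|n esc]; last by apply: not_esc; exists n.
by apply: contrapT => nS; apply: not_esc; exists 1; left.
Qed.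

End EscapeGame.

Theorem proposition2p1 (N m : nat) (S : vertex N -> Prop) :
  is_subtree S ->
  1 <= m <= N ->
  (forall R : vertex N -> Prop,
      is_regular_subtree m R -> infinite_set (fun s => S s /\ R s)) ->
  exists R' : vertex N -> Prop,
    is_regular_subtree (N - m + 1) R' /\ (forall s, R' s -> S s).
Proof.
move=> S_subtree m_range all_infinite.
case: (EM (exists n, escapes m S n [::])) => [[n root_esc]|root_safe].
  have [R [Rreg Rfin]] := escaping_root_finite S_subtree m_range root_esc.
  by case: Rfin; apply: all_infinite.
have [R [Rreg Rsafe]] : exists R : vertex N -> Prop,
    is_regular_subtree (N - m + 1) R /\ forall s, R s -> safe m S s.
  apply: regular_subtree_in; last exact: safe_successors.
  by split=> [|n esc]; [case: S_subtree | apply: root_safe; exists n].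
by exists R; split=> // s /Rsafe [].
Qed.
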